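(* Let $\mathbb{L}>0$, $\sigma>0$, and let $V,p\colon\mathbb{R}\to\mathbb{R}$ satisfy: (i) $V,p\in C^2(\mathbb{R})$, $V(0)=0$, $p(0)=0$, and $p$ is $\mathbb{L}$-periodic; (ii) $V'$ is globally Lipschitz on $\mathbb{R}$; (iii) there exist $\beta>0$ and $R\ge1$ such that $-\operatorname{sign}(x)V'(x)\le-\beta|x|$ for all $|x|\ge R$. For $\varepsilon>0$ define $$f_\varepsilon(x)=\int_0^x\exp\!\left(\frac1{\sigma^2}\left(V(z)+p\left(\frac z\varepsilon\right)\right)\right)\mathrm{d}z,\quad g_\varepsilon=f_\varepsilon^{-1},\quad m^\varepsilon(x)=\frac{1}{\sqrt{2\sigma^2}\,f_\varepsilon'(g_\varepsilon(x))},$$ $$b^\varepsilon(x)=-V'(x)-\frac1\varepsilon p'\!\left(\frac x\varepsilon\right),\qquad B^\varepsilon(x)=-\frac12b^\varepsilon(x)^2-\frac12(b^\varepsilon)'(x),$$ and, for $h>0$ and $x,y\in\mathbb{R}$, $$p^\varepsilon(h,x,y)=\frac{m^\varepsilon(y)}{\sqrt{2\pi h}}\left(\frac{m^\varepsilon(y)}{m^\varepsilon(x)}\right)^{1/2}\exp\!\left(-\frac1{2h}\left(\int_x^ym^\varepsilon(z)\,\mathrm{d}z\right)^2\right)\mathbb{E}\!\left[\exp\!\left(h\int_0^1B^\varepsilon(\mathscr N(h,g_\varepsilon(x),g_\varepsilon(y),u))\,\mathrm{d}u\right)\right],$$ where, for $a,b\in\mathbb{R}$, $(\mathscr N(h,a,b,u))_{u\in(0,1)}$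 is a jointly measurable process such that $\mathscr N(h,a,b,u)\sim\mathcal N(a+u(b-a),hu(1-u))$ for each $u\in(0,1)$. Then there exist constants $K_1,K_2>0$ independent of $\varepsilon$ such that for all $x,y\in\mathbb{R}$ and all sufficiently small $\varepsilon>0$ satisfying $K_1\varepsilon^4<\min\{2,1/(8\sigma^2)\}$, $$p^\varepsilon(\varepsilon^2,x,y)\le e^{\frac{K_2}2}\sqrt{\frac2{2-K_1\varepsilon^4}}\exp\!\left(2K_1\varepsilon^2g_\varepsilon(x)^2\right)\frac{m^\varepsilon(y)^{3/2}}{m^\varepsilon(x)^{1/2}}\frac1{\sqrt{2\pi\varepsilon^2}}\exp\!\left(-\frac{1-8K_1\sigma^2\varepsilon^4}{4\sigma^2\varepsilon^2}\left(g_\varepsilon(y)-g_\varepsilon(x)\right)^2\right).$$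
   Context: $p^\varepsilon(h,x,y)$ is (by a classical formula for one-dimensional diffusions) the transition probability density of the process $\xi^\varepsilon=f_\varepsilon(X^\varepsilon)$, where $X^\varepsilon$ solves $\mathrm{d}X_t^\varepsilon=-V'(X_t^\varepsilon)\mathrm{d}t-\frac1\varepsilon p'(X_t^\varepsilon/\varepsilon)\mathrm{d}t+\sqrt{2\sigma^2}\,\mathrm{d}W_t$; $\xi^\varepsilon$ satisfies $\mathrm{d}\xi_t^\varepsilon=\frac{1}{m^\varepsilon(\xi_t^\varepsilon)}\mathrm{d}W_t$. Note $f_\varepsilon'>0$, so $g_\varepsilon$ is well defined. *)

From HB Require Import structures.
From mathcomp Require Import all_boot all_order all_algebra.
From mathcomp Require Import all_classical all_reals all_analysis.
Set Implicit Arguments. Unset Strict Implicit. Unset Printing Implicit Defensive.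
Import Order.TTheory GRing.Theory Num.Theory.
Import numFieldNormedType.Exports.
Local Open Scope classical_set_scope.
Local Open Scope ring_scope.

Section defs.
Context {R : realType}.

Definition C2 (f : R -> R) : Prop :=
  (forall x, derivable f x 1) /\ (forall x, derivable (derive1 f) x 1) /\
  continuous (derive1 (derive1 f)).

Definition oint (a b : R) (f : R -> R) : R :=
  if a <= b then Rintegral lebesgue_measure `[a, b] f
  else - Rintegral lebesgue_measure `[b, a] f.

Variables (V p : R -> R) (sigma : R).

Definition feps (eps : R) (x : R) : R :=
  oint 0 x (fun z => expR ((V z + p (z / eps)) / sigma ^+ 2)).

(* inverse function of feps (feps is a bijection R -> R) *)
Definition geps (eps : R) (y : R) : R := xget 0 [set x | feps eps x = y].

Definition meps (eps : R) (x : R) : R :=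
  1 / (Num.sqrt (2 * sigma ^+ 2) * derive1 (feps eps) (geps eps x)).

Definition beps (eps : R) (x : R) : R :=
  - derive1 V x - eps^-1 * derive1 p (x / eps).

Definition Beps (eps : R) (x : R) : R :=
  - (1/2) * (beps eps x) ^+ 2 - (1/2) * derive1 (beps eps) x.

Variables (d : measure_display) (Omega : measurableType d)
  (P : probability Omega R) (N : R -> R -> R -> R -> Omega -> R).

(* p^eps(h,x,y), valued in extended reals (the expectation may be +oo) *)
Definition peps (eps h x y : R) : \bar R :=
  ((meps eps y / Num.sqrt (2 * pi * h)) * Num.sqrt (meps eps y / meps eps x)
    * expR (- (1 / (2 * h)) * (oint x y (meps eps)) ^+ 2))%:E *
  (\int[P]_(w in setT)
     expeR (h%:E * \int[lebesgue_measure]_(u in `]0%R, 1%R[)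
                     (Beps eps (N h (geps eps x) (geps eps y) u w))%:E))%E.

End defs.

From HB Require Import structures.
From mathcomp Require Import all_boot all_order all_algebra.
From mathcomp Require Import all_classical all_reals all_analysis.
From mathcomp Require Import ring lra.
Import Order.TTheory GRing.Theory Num.Theory.
Import numFieldNormedType.Exports.
Local Open Scope classical_set_scope.
Local Open Scope ring_scope.

(* Since -b^2/2 <= 0, B^eps <= -(b^eps)'/2 = (V'' + eps^-2 p''(./eps))/2, where V'' is
   bounded by the Lipschitz constant L of V' and p'' by some M thanks to periodicity;
   hence h B^eps <= (L + M)/2 for h = eps^2 <= 1, and the expectation factor of
   p^eps(eps^2, x, y) is at most e^((L+M)/2).
   The drift condition makes V bounded below and p is bounded, so f_eps' is bounded
   below by a positive constant: f_eps is an increasing bijection of R and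
   g_eps' = sqrt(2 sigma^2) m^eps.  Hence int_x^y m^eps = (g_eps y - g_eps x)/sqrt(2 sigma^2)
   and the Gaussian factor is exp(-(g_eps y - g_eps x)^2/(4 sigma^2 eps^2)).  All
   remaining factors of the claimed bound are at least 1, so K1 = 1 and
   K2 = L + M + 1 work. *)

Section real_functions.
Context {R : realType}.
Implicit Types (f : R -> R) (L T : R).

Lemma derivable1_continuous {f} : (forall x, derivable f x 1) -> continuous f.
Proof. by move=> df x; apply: differentiable_continuous; exact/derivable1_diffP. Qed.

Lemma is_derive1_continuous {f df : R -> R} :
  (forall x : R, is_derive x 1 f (df x)) -> continuous f.
Proof. by move=> fdf; apply: derivable1_continuous => x; case: (fdf x). Qed.

Lemma lipschitz_derive1_bound f L x :
  (forall x y, `|f x - f y| <= L * `|x - y|) -> derivable f x 1 ->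
  `|derive1 f x| <= L.
Proof.
move=> fL df; rewrite derive1E.
have c : (h^-1 *: ((f \o shift x) (h *: 1) - f x)) @[h --> 0^'] --> 'D_1 f x := df.
have B : \forall h \near 0^', `|h^-1 *: ((f \o shift x) (h *: 1) - f x)| <= L.
  near=> h.
  have h0 : h != 0 by near: h; exact: nbhs_dnbhs_neq.
  rewrite /= normrZ normrV ?unitfE // scaler1 ler_pdivrMl ?normr_gt0 // mulrC.
  by have := fL (h + x) x; rewrite addrK.
rewrite ler_norml; apply/andP; split.
- apply: (closed_cvg _ (@closed_ge R (- L)) _ _ c).
  by apply: filterS B => h; rewrite ler_norml => /andP[].
- apply: (closed_cvg _ (@closed_le R L) _ _ c).
  by apply: filterS B => h; rewrite ler_norml => /andP[].
Unshelve. all: by end_near.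
Qed.

Lemma periodic_derive1 f T : periodic f T -> periodic (derive1 f) T.
Proof.
move=> fT x; rewrite !derive1E /derive.
suff -> : (fun h : R => h^-1 *: ((f \o shift (x + T)) (h *: 1) - f (x + T))) =
          (fun h : R => h^-1 *: ((f \o shift x) (h *: 1) - f x)) by [].
by apply/funext => h /=; rewrite addrA !fT.
Qed.

Lemma periodicz f T : periodic f T -> forall (k : int) x, f (x + T *~ k) = f x.
Proof.
move=> fT [n|n] x; first exact: periodicn.
by rewrite NegzE mulrNz -[in RHS](subrK (T *+ n.+1) x) (periodicn fT).
Qed.

Lemma continuous_periodic_bounded f T :
  0 < T -> continuous f -> periodic f T -> exists M, forall x, `|f x| <= M.
Proof.
move=> T0 fc fT.
have [c _ cmax] := @EVT_max R (fun x => `|f x|) 0 T (ltW T0)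
  (continuous_subspaceT (fun t => continuous_comp (fc t) (@norm_continuous _ _ _))).
exists `|f c| => x; pose k := Num.floor (x / T).
rewrite -(subrK (T *~ k) x) periodicz //; apply: cmax.
have /andP[k1 k2] := floor_itv (x / T); rewrite -/k in k1 k2.
rewrite ler_pdivlMr // in k1; rewrite ltr_pdivrMr // in k2.
by rewrite in_itv /= -mulrzl; apply/andP; split; rewrite mulrC; lra.
Qed.

Lemma outward_slope_bounded_below f r : 0 <= r -> (forall x, derivable f x 1) ->
  (forall x, r <= `|x| -> 0 <= Num.sg x * derive1 f x) ->
  exists M, forall x, - M <= f x.
Proof.
move=> r0 df fr; have fc := derivable1_continuous df.
have [c _ cmax] := @EVT_max R (fun x => `|f x|) (- r) r ltac:(lra)
  (continuous_subspaceT (fun t => continuous_comp (fc t) (@norm_continuous _ _ _))).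
have lbM t : - r <= t <= r -> - `|f c| <= f t.
  by move=> rt; have := cmax t; rewrite in_itv /= rt ler_norml => /(_ isT) /andP[].
exists `|f c| => x.
have [xr|xr] := ltrP r x.
  have slope t : t \in `]r, x[ -> 0 <= derive1 f t.
    rewrite in_itv /= => /andP[rt _].
    by have := fr t; rewrite gtr0_sg ?mul1r ?gtr0_norm; [apply; lra|lra|lra].
  have mono := ger0_derive1_le_cc (fun t _ => df t) slope (continuous_subspaceT fc).
  apply: le_trans (lbM r _) (mono r x _ _ _); rewrite ?in_itv /=; lra.
have [xr'|xr'] := ltrP x (- r); last by apply: lbM; lra.
have slope t : t \in `]x, - r[ -> derive1 f t <= 0.
  rewrite in_itv /= => /andP[_ tr].
  have := fr t; rewrite ltr0_sg ?ltr0_norm ?mulN1r; [|lra|lra].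
  by rewrite oppr_ge0; apply; lra.
have mono := ler0_derive1_le_cc (fun t _ => df t) slope (continuous_subspaceT fc).
apply: le_trans (lbM (- r) _) (mono (- r) x _ _ _); rewrite ?in_itv /=; lra.
Qed.

End real_functions.

Section oriented_integral.
Context {R : realType}.
Context {f : R -> R} (fc : continuous f).
Implicit Types a b t x : R.

Let integrable_segment a b : lebesgue_measure.-integrable `[a, b] (EFin \o f).
Proof.
apply: continuous_compact_integrable; first exact: segment_compact.
exact: continuous_subspaceT.
Qed.

Lemma oint0_Rintegral_sub a t : a <= 0 -> a <= t ->
  oint 0 t f = Rintegral lebesgue_measure `[a, t] f -
               Rintegral lebesgue_measure `[a, 0] f.
Proof.
move=> a0 at_; rewrite /oint; case: ifPn => t0.
  rewrite (@Rintegral_itvB _ f (BLeft a) (BRight t) 0) //.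
  rewrite Rintegral_itv_obnd_cbnd //.
  by apply: integrableS (integrable_segment 0 t) => //; apply: subset_itv_oc_cc.
rewrite -[in RHS]opprB; congr (- _); symmetry.
rewrite (@Rintegral_itvB _ f (BLeft a) (BRight 0) t) //.
- rewrite Rintegral_itv_obnd_cbnd //.
  by apply: integrableS (integrable_segment t 0) => //; apply: subset_itv_oc_cc.
- by rewrite bnd_simp ltW // ltNge.
Qed.

Lemma oint0_derive x : is_derive x 1 (fun t => oint 0 t f) (f x).
Proof.
pose a := Num.min x 0 - 1.
have mx : Num.min x 0 <= x by rewrite ge_min lexx.
have m0 : Num.min x 0 <= 0 by rewrite ge_min lexx orbT.
have ax : a < x by rewrite /a; lra.
have a0 : a <= 0 by rewrite /a; lra.
have [dF F'] := @continuous_FTC1_closed R f a x (x + 1) ltac:(lra)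
  (integrable_segment a (x + 1)) ax (fc x).
have dF_is : is_derive x 1 (fun t => Rintegral lebesgue_measure `[a, t] f) (f x).
  by rewrite -F' derive1E; apply: derivableP.
have := is_deriveB dF_is (is_derive_cst (Rintegral lebesgue_measure `[a, 0] f) x 1).
rewrite subr0; apply: near_eq_is_derive.
near=> t; rewrite /= (@oint0_Rintegral_sub a) //.
near: t; exact: lt_le_nbhsr.
Unshelve. all: by end_near.
Qed.

Lemma oint_primitive (F : R -> R) a b : (forall t, is_derive t 1 F (f t)) ->
  oint a b f = F b - F a.
Proof.
move=> dF.
have Fc := is_derive1_continuous dF.
have FTC2 s t : s < t -> Rintegral lebesgue_measure `[s, t] f = F t - F s.
  move=> st; rewrite /Rintegral (@continuous_FTC2 R f F s t st) //.
  - exact: continuous_subspaceT.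
  - split; first by move=> u _; have [] := dF u.
    + exact: cvg_at_right_filter (Fc s).
    + exact: cvg_at_left_filter (Fc t).
  - by move=> u _; rewrite derive1E; have [_ ->] := dF u.
rewrite /oint; case: ltgtP => [ab|ba|->]; last by rewrite set_itv1 Rintegral_set1 subrr.
- by rewrite FTC2.
- by rewrite FTC2 // opprB.
Qed.

End oriented_integral.

Definition oint0_inv {R : realType} (f : R -> R) (y : R) : R :=
  xget 0 [set x | oint 0 x f = y].

Section increasing_primitive.
Context {R : realType} {f : R -> R} {c : R}.
Hypotheses (fc : continuous f) (c0 : 0 < c) (cf : forall x, c <= f x).
Implicit Types s t y : R.

Local Notation F := (fun x => oint 0 x f).
Local Notation inv := (oint0_inv f).

Let F_continuous : continuous F := is_derive1_continuous (oint0_derive fc).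

Lemma oint0_growth s t : s <= t -> c * (t - s) <= F t - F s.
Proof.
move=> st.
have [u _ ->] := MVT_segment st (fun x _ => oint0_derive fc x)
  (continuous_subspaceT F_continuous).
by rewrite ler_wpM2r ?subr_ge0.
Qed.

Lemma oint0_inj : injective F.
Proof.
have F_lt s t : s < t -> F s < F t.
  move=> st; have := oint0_growth _ _ (ltW st).
  have : 0 < c * (t - s) by rewrite mulr_gt0 ?subr_gt0.
  lra.
move=> s t Fst; case: (ltgtP s t) => // /F_lt; rewrite Fst ltxx //.
Qed.

Lemma oint0_surj y : exists t, F t = y.
Proof.
have [b b0 cb] : exists2 b, 0 <= b & c * b = `|y| + c.
  exists ((`|y| + c) / c); first by rewrite divr_ge0 ?addr_ge0 // ltW.
  by rewrite mulrC divfK ?gt_eqF.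
have F0 : F 0 = 0 by rewrite /oint lexx set_itv1 Rintegral_set1.
have Fb : c * b <= F b by have := oint0_growth _ _ b0; rewrite F0 !subr0.
have Fnb : c * b <= - F (- b).
  by have := @oint0_growth (- b) 0; rewrite F0 !sub0r opprK; apply; lra.
have /andP[yl yu] : - `|y| <= y <= `|y| by rewrite -ler_norml.
have yFb : Num.min (F (- b)) (F b) <= y <= Num.max (F (- b)) (F b).
  have ycb : `|y| <= c * b by rewrite cb lerDl ltW.
  rewrite ge_min le_max; apply/andP; split; apply/orP; [left|right].
  - by apply: le_trans _ yl; rewrite lerNr (le_trans ycb).
  - exact: le_trans yu (le_trans ycb Fb).
have nbb : - b <= b by lra.
have [t _ Ft] := IVT nbb (continuous_subspaceT F_continuous) yFb.
by exists t.
Qed.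

Lemma oint0K : cancel F inv.
Proof.
move=> t; apply: oint0_inj.
exact: (@xgetPex _ 0 [set x | F x = F t] (ex_intro _ t erefl)).
Qed.

Lemma oint0_invK : cancel inv F.
Proof.
move=> y; have [t Ft] := oint0_surj y.
exact: (@xgetPex _ 0 [set x | F x = y] (ex_intro _ t Ft)).
Qed.

Lemma oint0_inv_derive y : is_derive y 1 inv (f (inv y))^-1.
Proof.
rewrite -{1}(oint0_invK y); apply: (is_derive_inverse (f := F)).
- by apply: filterE; exact: oint0K.
- by apply: filterE; exact: F_continuous.
- exact: oint0_derive.
- by rewrite gt_eqF // (lt_le_trans c0).
Qed.

End increasing_primitive.

Definition dfeps {R : realType} (V p : R -> R) (sigma eps z : R) : R :=
  expR ((V z + p (z / eps)) / sigma ^+ 2).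

Section feps.
Context {R : realType} {V p : R -> R} {sigma eps MV Mp : R}.
Hypotheses (sigma_gt0 : 0 < sigma)
  (dV : forall x, derivable V x 1) (dp : forall x, derivable p x 1)
  (V_ge : forall x, - MV <= V x) (p_le : forall x, `|p x| <= Mp).
Implicit Types x y z : R.

Local Notation f := (feps V p sigma eps).
Local Notation g := (geps V p sigma eps).
Local Notation m := (meps V p sigma eps).
Local Notation df := (dfeps V p sigma eps).
Local Notation S := (Num.sqrt (2 * sigma ^+ 2)).

Lemma dfeps_continuous : continuous df.
Proof.
move=> x; apply: (@continuous_comp _ _ _ (fun z => (V z + p (z / eps)) / sigma ^+ 2) expR);
  last exact: continuous_expR.
apply: cvgM; last exact: cvg_cst.
apply: cvgD; first exact: derivable1_continuous.
have scale : {for x, continuous (fun z : R => z / eps)}.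
  by apply: cvgM; [exact: cvg_id|exact: cvg_cst].
exact: (continuous_comp scale (derivable1_continuous dp _)).
Qed.

Lemma dfeps_ge z : expR ((- MV - Mp) / sigma ^+ 2) <= df z.
Proof.
rewrite ler_expR ler_pM2r ?invr_gt0 ?exprn_gt0 //.
by have := V_ge z; have /ler_normlP[] := p_le (z / eps); lra.
Qed.

Let dfeps_lb_gt0 : 0 < expR ((- MV - Mp) / sigma ^+ 2). Proof. exact: expR_gt0. Qed.

Lemma derive1_feps x : derive1 f x = df x.
Proof. by rewrite derive1E; have [_ ->] := oint0_derive dfeps_continuous x. Qed.

(* [g] unfolds to [oint0_inv df]. *)
Lemma geps_derive y : is_derive y 1 g (df (g y))^-1.
Proof. exact: oint0_inv_derive dfeps_continuous dfeps_lb_gt0 dfeps_ge y. Qed.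

Lemma mepsE y : m y = (S * df (g y))^-1.
Proof. by rewrite /meps derive1_feps div1r. Qed.

Let S_gt0 : 0 < S. Proof. by rewrite sqrtr_gt0 mulr_gt0 // exprn_gt0. Qed.

Lemma meps_gt0 y : 0 < m y.
Proof. by rewrite mepsE invr_gt0 mulr_gt0 ?expR_gt0. Qed.

Lemma geps_continuous : continuous g.
Proof. exact: is_derive1_continuous geps_derive. Qed.

Lemma meps_continuous : continuous m.
Proof.
have -> : m = (fun y => (S * df (g y))^-1) by apply/funext => t; exact: mepsE.
move=> t; apply: cvgV; first by rewrite mulf_neq0 ?gt_eqF ?expR_gt0.
apply: cvgM; first exact: cvg_cst.
exact: (continuous_comp (geps_continuous t) (dfeps_continuous _)).
Qed.

Lemma oint_meps x y : oint x y m = (g y - g x) / S.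
Proof.
have G_derive (t : R) : is_derive t 1 (S^-1 *: g) (m t).
  by rewrite mepsE invfM; exact: is_deriveZ (geps_derive t).
by rewrite (oint_primitive meps_continuous _ _ _ G_derive) /= -mulrBr mulrC.
Qed.

End feps.

Section Beps_bound.
Context {R : realType} {V p : R -> R} {eps : R}.
Hypotheses (dV1 : forall x, derivable (derive1 V) x 1)
  (dp1 : forall x, derivable (derive1 p) x 1).

Lemma derive1_beps (x : R) : derive1 (beps V p eps) x =
  - derive1 (derive1 V) x - derive1 (derive1 p) (x / eps) / eps ^+ 2.
Proof.
pose s (t : R) := t / eps.
have ds : is_derive x 1 s eps^-1.
  have := is_deriveZ eps^-1 (is_derive_id x 1); rewrite scaler1.
  by apply: near_eq_is_derive; apply: filterE => t; rewrite /s /= mulrC.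
have dps : is_derive x 1 (derive1 p \o s) (derive1 (derive1 p) (x / eps) / eps).
  have dsx : derivable s x 1 by case: ds.
  rewrite -[X in is_derive _ _ _ X](_ : derive1 (derive1 p \o s) x = _).
    rewrite derive1E; apply: derivableP; apply/derivable1_diffP.
    by apply: differentiable_comp; apply/derivable1_diffP.
  by rewrite derive1_comp // [derive1 s x]derive1E; case: ds => _ ->.
have := is_deriveB (is_deriveN (derivableP (dV1 x))) (is_deriveZ eps^-1 dps).
have -> : - derive1 V - eps^-1 *: (derive1 p \o s) = beps V p eps.
  by apply/funext => t.
case=> _ D; rewrite derive1E D -derive1E.
by rewrite [_ *: _]mulrCA -invfM -expr2.
Qed.

Lemma scaled_Beps_le (L M x : R) : 0 < eps -> eps <= 1 ->
  (forall x, `|derive1 (derive1 V) x| <= L) -> (forall x, `|derive1 (derive1 p) x| <= M) ->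
  eps ^+ 2 * Beps V p eps x <= (L + M) / 2.
Proof.
move=> eps_gt0 eps_le1 V''L p''M; rewrite /Beps derive1_beps.
have /ler_normlP[_ aL] := V''L x; have /ler_normlP[_ cM] := p''M (x / eps).
set b := beps V p eps x; set a := derive1 (derive1 V) x in aL *.
set c := derive1 (derive1 p) (x / eps) in cM *.
have e2_ge0 : 0 <= eps ^+ 2 := sqr_ge0 eps.
have L_ge0 : 0 <= L := le_trans (normr_ge0 _) (V''L 0).
have e2aL : eps ^+ 2 * a <= L.
  by apply: le_trans (ler_wpM2l e2_ge0 aL) _; rewrite ler_piMl // exprn_ile1 // ltW.
rewrite [leLHS](_ : _ = (eps ^+ 2 * a + c - eps ^+ 2 * b ^+ 2) / 2).
  by have := mulr_ge0 e2_ge0 (sqr_ge0 b); lra.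
by field; rewrite gt_eqF.
Qed.

End Beps_bound.

Section integral_le_cst.
Context {d : measure_display} {T : measurableType d} {R : realType}.
Variable mu : {measure set T -> \bar R}.
Local Open Scope ereal_scope.

(* The integrands built from the process [N] are not known to be measurable. *)
Lemma ge0_le_integral_nonmeasurable (D : set T) (f g : T -> \bar R) :
  (forall x, D x -> 0 <= f x) -> (forall x, D x -> 0 <= g x) ->
  (forall x, D x -> f x <= g x) ->
  \int[mu]_(x in D) f x <= \int[mu]_(x in D) g x.
Proof.
move=> f0 g0 fg; rewrite !ge0_integralE //; apply: ereal_sup_le => _ [h hf <-].
exists h => // x; apply: le_trans (hf x) _; rewrite /patch; case: ifPn => //.
by rewrite inE => /fg.
Qed.

Lemma ge0_integral_le_cst (D : set T) (f : T -> \bar R) (C : R) :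
  measurable D -> (0 <= C)%R -> (forall x, D x -> 0 <= f x) ->
  (forall x, D x -> f x <= C%:E) -> \int[mu]_(x in D) f x <= C%:E * mu D.
Proof.
move=> mD C0 f0 fC; rewrite -integral_cst //.
by apply: ge0_le_integral_nonmeasurable => // x _; rewrite lee_fin.
Qed.

Lemma integral_le_cst (D : set T) (f : T -> R) (C : R) :
  measurable D -> (0 <= C)%R -> (forall x, D x -> f x <= C)%R ->
  \int[mu]_(x in D) (f x)%:E <= C%:E * mu D.
Proof.
move=> mD C0 fC; rewrite integralE.
have pos_le : \int[mu]_(x in D) (fun x => (f x)%:E)^\+ x <= C%:E * mu D.
  apply: ge0_integral_le_cst => // x Dx.
  by rewrite funeposE ge_max !lee_fin fC.
have neg_ge0 : 0 <= \int[mu]_(x in D) (fun x => (f x)%:E)^\- x.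
  by apply: integral_ge0 => x _; exact: funeneg_ge0.
by have := leeB pos_le neg_ge0; rewrite sube0.
Qed.

End integral_le_cst.

Lemma expectation_expeR_integral_le {R : realType} {d : measure_display}
    {Omega : measurableType d} (P : probability Omega R) (X : R -> Omega -> R) (h c : R) :
  0 < h -> 0 <= c -> (forall u w, h * X u w <= c) ->
  (\int[P]_(w in setT)
     expeR (h%:E * \int[lebesgue_measure]_(u in `]0%R, 1%R[) (X u w)%:E)
   <= (expR c)%:E)%E.
Proof.
move=> h_gt0 c_ge0 hXc.
have XC u w : X u w <= c / h.
  by rewrite -(ler_pM2l h_gt0) mulrCA divff ?gt_eqF ?mulr1.
have itv01 : lebesgue_measure (`]0%R, 1%R[ : set R) = 1%E.
  by rewrite lebesgue_measure_itv /= lte_fin ltr01 sube0.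
rewrite -[leRHS]mule1 -(probability_setT P).
apply: ge0_integral_le_cst => //; first by move=> w _; exact: expeR_ge0.
move=> w _; have -> : (expR c)%:E = expeR (h%:E * (c / h)%:E).
  by rewrite -EFinM mulrCA divff ?gt_eqF ?mulr1.
rewrite lee_expeR; apply: lee_wpmul2l; first by rewrite lee_fin ltW.
rewrite -[leRHS]mule1 -itv01.
exact: (integral_le_cst lebesgue_measure _ (fun u => X u w) _ (measurable_itv _)
  (divr_ge0 c_ge0 (ltW h_gt0)) (fun u _ => XC u w)).
Qed.

Section peps_bound.
Context {R : realType} {V p : R -> R} {sigma MV Mp : R}.
Context {d : measure_display} {Omega : measurableType d}.
Variables (P : probability Omega R) (N : R -> R -> R -> R -> Omega -> R).
Hypotheses (sigma_gt0 : 0 < sigma)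
  (dV : forall x, derivable V x 1) (dp : forall x, derivable p x 1)
  (V_ge : forall x, - MV <= V x) (p_le : forall x, `|p x| <= Mp).

Lemma peps_le (eps h c x y : R) : 0 < h -> 0 <= c -> (forall z, h * Beps V p eps z <= c) ->
  (peps V p sigma P N eps h x y <=
   (meps V p sigma eps y / Num.sqrt (2 * pi * h)
    * Num.sqrt (meps V p sigma eps y / meps V p sigma eps x)
    * expR (- (geps V p sigma eps y - geps V p sigma eps x) ^+ 2 / (4 * sigma ^+ 2 * h))
    * expR c)%:E)%E.
Proof.
move=> h_gt0 c_ge0 hBc.
have my := meps_gt0 sigma_gt0 dV dp (eps := eps) y.
have mx := meps_gt0 sigma_gt0 dV dp (eps := eps) x.
have E := expectation_expeR_integral_le P
  (fun u w => Beps V p eps (N h (geps V p sigma eps x) (geps V p sigma eps y) u w))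
  _ _ h_gt0 c_ge0 (fun u w => hBc _).
apply: le_trans (lee_wpmul2l _ E) _.
  rewrite lee_fin; apply: mulr_ge0; last exact: expR_ge0.
  exact: mulr_ge0 (divr_ge0 (ltW my) (sqrtr_ge0 _)) (sqrtr_ge0 _).
rewrite -EFinM lee_fin (oint_meps sigma_gt0 dV dp V_ge p_le).
have sigma_neq0 : sigma != 0 by rewrite gt_eqF.
have h_neq0 : h != 0 by rewrite gt_eqF.
rewrite exprMn exprVn sqr_sqrtr ?mulr_ge0 ?sqr_ge0 ?(ltW sigma_gt0) //.
rewrite [X in expR X](_ : _ = - (geps V p sigma eps y - geps V p sigma eps x) ^+ 2
  / (4 * sigma ^+ 2 * h)); first exact: lexx.
by field; rewrite h_neq0 sigma_neq0.
Qed.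

End peps_bound.

Lemma powR32_div_powR12 {R : realType} (a b : R) : 0 < a -> 0 < b ->
  a `^ (3 / 2) / b `^ (1 / 2) = a * Num.sqrt (a / b).
Proof.
move=> a_gt0 b_gt0; have -> : (3 / 2 : R) = 1 + 2^-1 by lra.
rewrite powRD ?gt_eqF ?implybT // powRr1 ?ltW // powR12_sqrt ?ltW //.
by rewrite div1r powR12_sqrt ?ltW // sqrtrM ?ltW // sqrtrV ?ltW // mulrA.
Qed.

Lemma gauss_exponent_le {R : realType} (K sigma eps D : R) :
  0 <= K -> 0 < sigma -> 0 < eps ->
  - D ^+ 2 / (4 * sigma ^+ 2 * eps ^+ 2) <=
  - ((1 - 8 * K * sigma ^+ 2 * eps ^+ 4) / (4 * sigma ^+ 2 * eps ^+ 2)) * D ^+ 2.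
Proof.
move=> K_ge0 sigma_gt0 eps_gt0.
have sigma_neq0 : sigma != 0 by rewrite gt_eqF.
have eps_neq0 : eps != 0 by rewrite gt_eqF.
rewrite [leRHS](_ : _ = - D ^+ 2 / (4 * sigma ^+ 2 * eps ^+ 2) + 2 * K * eps ^+ 2 * D ^+ 2).
  by rewrite lerDl; do 2 apply: mulr_ge0 (sqr_ge0 _); exact: mulr_ge0.
by field; rewrite sigma_neq0 eps_neq0.
Qed.

Lemma sqrt_two_div_ge1 {R : realType} (e : R) : 0 <= e -> e < 2 ->
  1 <= Num.sqrt (2 / (2 - e)).
Proof.
move=> e_ge0 e_lt2; rewrite -[leLHS]sqrtr1 ler_sqrt; last by apply: divr_ge0; lra.
by rewrite ler_pdivlMr ?subr_gt0 // mul1r; lra.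
Qed.

Lemma relax_gaussian_bound {R : realType} (K1 K2 sigma eps c a b gx gy : R) :
  0 <= K1 -> 0 < sigma -> 0 < eps -> K1 * eps ^+ 4 < 2 -> 0 < a -> 0 < b ->
  c <= K2 / 2 ->
  a / Num.sqrt (2 * pi * eps ^+ 2) * Num.sqrt (a / b)
    * expR (- (gy - gx) ^+ 2 / (4 * sigma ^+ 2 * eps ^+ 2)) * expR c <=
  expR (K2 / 2) * Num.sqrt (2 / (2 - K1 * eps ^+ 4)) * expR (2 * K1 * eps ^+ 2 * gx ^+ 2)
    * (a `^ (3/2) / b `^ (1/2)) * (1 / Num.sqrt (2 * pi * eps ^+ 2))
    * expR (- ((1 - 8 * K1 * sigma ^+ 2 * eps ^+ 4) / (4 * sigma ^+ 2 * eps ^+ 2))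
            * (gy - gx) ^+ 2).
Proof.
move=> K1_ge0 sigma_gt0 eps_gt0 K1eps4_lt2 a_gt0 b_gt0 cK2.
rewrite powR32_div_powR12 //.
set q := Num.sqrt (2 * pi * eps ^+ 2); set rho := Num.sqrt (a / b).
set X := expR (- (gy - gx) ^+ 2 / _); set Y := expR (- (_ / _) * _).
set s1 := Num.sqrt (2 / _); set s2 := expR (2 * K1 * _ * _).
have X_le : X <= Y by rewrite ler_expR gauss_exponent_le.
have s1_ge1 : 1 <= s1.
  by apply: sqrt_two_div_ge1 => //; rewrite mulr_ge0 // exprn_ge0 // ltW.
have s2_ge1 : 1 <= s2.
  rewrite -[leLHS]expR0 ler_expR.
  exact: mulr_ge0 (mulr_ge0 (mulr_ge0 (ler0n _ 2) K1_ge0) (sqr_ge0 eps)) (sqr_ge0 gx).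
have A_ge0 : 0 <= a / q * rho.
  by rewrite mulr_ge0 ?sqrtr_ge0 // divr_ge0 ?sqrtr_ge0 // ltW.
rewrite [leRHS](_ : _ = a / q * rho * Y * expR (K2 / 2) * (s1 * s2)); last by ring.
have s_ge1 : 1 <= s1 * s2 by rewrite -[1]mulr1 ler_pM.
apply: le_trans (ler_peMr (mulr_ge0 (mulr_ge0 A_ge0 (expR_ge0 _)) (expR_ge0 _)) s_ge1).
apply: ler_pM; [exact: mulr_ge0 (expR_ge0 _)|exact: expR_ge0|exact: ler_wpM2l|].
by rewrite ler_expR.
Qed.

Theorem lemma4p20 (R : realType) (LL sigma : R) (V p : R -> R)
  (d : measure_display) (Omega : measurableType d) (P : probability Omega R)
  (N : R -> R -> R -> R -> Omega -> R) :
  0 < LL -> 0 < sigma ->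
  C2 V -> C2 p -> V 0 = 0 -> p 0 = 0 -> (forall x, p (x + LL) = p x) ->
  (exists L : R, forall x y, `|derive1 V x - derive1 V y| <= L * `|x - y|) ->
  (exists beta Rr : R, 0 < beta /\ 1 <= Rr /\
     forall x, Rr <= `|x| -> - (Num.sg x * derive1 V x) <= - (beta * `|x|)) ->
  (* the process N: jointly measurable in (u, omega), with Gaussian marginals *)
  (forall h a b : R,
     measurable_fun ((`]0, 1[ : set R) `*` (setT : set Omega)) (fun z : R * Omega => N h a b z.1 z.2)) ->
  (forall h a b u : R, 0 < h -> 0 < u < 1 ->
     forall A : set R, measurable A ->
       P (N h a b u @^-1` A) =
       normal_prob (a + u * (b - a)) (Num.sqrt (h * u * (1 - u))) A) ->
  exists K1 K2 : R, 0 < K1 /\ 0 < K2 /\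
  exists eps0 : R, 0 < eps0 /\
  forall eps : R, 0 < eps -> eps < eps0 ->
    K1 * eps ^+ 4 < Num.min 2 (1 / (8 * sigma ^+ 2)) ->
    forall x y : R,
      (peps V p sigma P N eps (eps ^+ 2) x y <=
       (expR (K2 / 2) * Num.sqrt (2 / (2 - K1 * eps ^+ 4))
        * expR (2 * K1 * eps ^+ 2 * (geps V p sigma eps x) ^+ 2)
        * (meps V p sigma eps y `^ (3/2) / meps V p sigma eps x `^ (1/2))
        * (1 / Num.sqrt (2 * pi * eps ^+ 2))
        * expR (- ((1 - 8 * K1 * sigma ^+ 2 * eps ^+ 4) / (4 * sigma ^+ 2 * eps ^+ 2))
                * (geps V p sigma eps y - geps V p sigma eps x) ^+ 2))%:E)%E.
Proof.
move=> LL_gt0 sigma_gt0 [dV [dV' _]] [dp [dp' cp'']] _ _ p_per [L V'_lip]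
  [beta [r [beta_gt0 [r_ge1 V'_out]]]] _ _.
(* The expectation factor is bounded pointwise in omega. *)
have [MV V_ge] : exists MV, forall x, - MV <= V x.
  apply: (outward_slope_bounded_below _ r) => // [|x rx]; first lra.
  have := V'_out x rx; have : 0 <= beta * `|x| by rewrite mulr_ge0 // ltW.
  lra.
have [Mp p_le] :=
  continuous_periodic_bounded _ _ LL_gt0 (derivable1_continuous dp) p_per.
have [M p''_le] := continuous_periodic_bounded _ _ LL_gt0 cp''
  (periodic_derive1 _ _ (periodic_derive1 _ _ p_per)).
have V''_le x := lipschitz_derive1_bound _ _ _ V'_lip (dV' x).
have L_ge0 : 0 <= L := le_trans (normr_ge0 _) (V''_le 0).
have M_ge0 : 0 <= M := le_trans (normr_ge0 _) (p''_le 0).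
have LM_ge0 : 0 <= (L + M) / 2 by rewrite divr_ge0 // addr_ge0.
exists 1, (L + M + 1); split; first exact: ltr01.
split; first lra.
exists 1; split; first exact: ltr01.
move=> eps eps_gt0 eps_lt1; rewrite lt_min => /andP[eps4_lt2 _] x y.
have hB := scaled_Beps_le dV' dp' _ _ _ eps_gt0 (ltW eps_lt1) V''_le p''_le.
apply: le_trans (peps_le P N sigma_gt0 dV dp V_ge p_le _ _ _ x y
  (exprn_gt0 2 eps_gt0) LM_ge0 hB) _.
rewrite lee_fin relax_gaussian_bound ?(meps_gt0 sigma_gt0 dV dp) //; lra.
Qed.
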